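(* Let $V\subseteq\mathbb R^d$ be a finite set of points and let $G=G(V,1)$ be the geometric graph on $V$ in which distinct $v,w$ are adjacent iff $\|v-w\|\le1$. Then $$\chi_f(G)=\sup_{\varphi\in\mathcal F}M(V,\varphi).$$
   Context: $\|\cdot\|$ is a norm on $\mathbb R^d$. $\chi_f(G)$ is the fractional chromatic number: the optimum of $\min 1^Tx$ s.t. $Ax\ge1,x\ge0$, with $A$ the vertex–stable-set incidence matrix of $G$. For $V\subseteq\mathbb R^d$ and nonnegative $\varphi$, $M(V,\varphi):=\sup_{x\in\mathbb R^d}\sum_{v\in V}\varphi(v-x)$. A set $S$ is well-spread if $\|v-w\|>1$ for all distinct $v,w\in S$; a nonnegative measurable $\varphi$ is feasible if $\sum_{v\in S}\varphi(v)\le1$ for every well-spread $S$; $\mathcal F$ is the set of feasible functions. *)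

From Stdlib Require Fin.
From Stdlib Require Import Reals List Classical ClassicalEpsilon.
Import ListNotations.
Open Scope R_scope.

Definition vec (d : nat) := Fin.t d -> R.
Definition vadd {d} (x y : vec d) : vec d := fun i => x i + y i.
Definition vopp {d} (x : vec d) : vec d := fun i => - x i.
Definition vsub {d} (x y : vec d) : vec d := fun i => x i - y i.
Definition vscal {d} (c : R) (x : vec d) : vec d := fun i => c * x i.
Definition vzero {d} : vec d := fun _ => 0.

Definition is_norm {d} (N : vec d -> R) : Prop :=
  (forall x, N x = 0 -> x = vzero) /\
  (forall c x, N (vscal c x) = Rabs c * N x) /\
  (forall x y, N (vadd x y) <= N x + N y).

Definition pb (P : Prop) : bool :=
  if excluded_middle_informative P then true else false.

Definition sumL {A} (f : A -> R) (l : list A) : R :=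
  fold_right (fun a acc => f a + acc) 0 l.

(** All sublists (the power set of a duplicate-free list). *)
Fixpoint subsets {A} (l : list A) : list (list A) :=
  match l with
  | [] => [[]]
  | a :: l' => map (cons a) (subsets l') ++ subsets l'
  end.

Definition adjacent {d} (N : vec d -> R) (v w : vec d) : Prop :=
  v <> w /\ N (vsub v w) <= 1.

Definition stable {d} (N : vec d -> R) (S : list (vec d)) : Prop :=
  forall v w, In v S -> In w S -> ~ adjacent N v w.

(** The stable sets of G(V,1), i.e. the columns of the vertex--stable-set
    incidence matrix A. *)
Definition stable_sets {d} (N : vec d -> R) (V : list (vec d)) :=
  filter (fun S => pb (stable N S)) (subsets V).

(** Feasible points of the LP  A x >= 1, x >= 0  (x indexed by stable sets). *)
Definition frac_col_feasible {d} (N : vec d -> R) (V : list (vec d))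
    (x : list (vec d) -> R) : Prop :=
  (forall S, In S (stable_sets N V) -> 0 <= x S) /\
  (forall v, In v V ->
     1 <= sumL x (filter (fun S => pb (In v S)) (stable_sets N V))).

Definition frac_col_value {d} (N : vec d -> R) (V : list (vec d))
    (x : list (vec d) -> R) : R :=
  sumL x (stable_sets N V).

(** c is the optimum of min 1^T x s.t. Ax >= 1, x >= 0, i.e. c = chi_f(G). *)
Definition is_frac_chrom {d} (N : vec d -> R) (V : list (vec d)) (c : R) : Prop :=
  (exists x, frac_col_feasible N V x /\ frac_col_value N V x = c) /\
  (forall x, frac_col_feasible N V x -> c <= frac_col_value N V x).

Definition well_spread {d} (N : vec d -> R) (S : vec d -> Prop) : Prop :=
  forall v w, S v -> S w -> v <> w -> N (vsub v w) > 1.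

Definition open_set {d} (N : vec d -> R) (U : vec d -> Prop) : Prop :=
  forall x, U x -> exists r, 0 < r /\ forall y, N (vsub y x) < r -> U y.

Definition sigma_algebra {d} (Sig : (vec d -> Prop) -> Prop) : Prop :=
  Sig (fun _ => False) /\
  (forall A, Sig A -> Sig (fun x => ~ A x)) /\
  (forall An : nat -> vec d -> Prop, (forall n, Sig (An n)) ->
     Sig (fun x => exists n, An n x)).

Definition borel {d} (N : vec d -> R) (A : vec d -> Prop) : Prop :=
  forall Sig : (vec d -> Prop) -> Prop, sigma_algebra Sig ->
    (forall U, open_set N U -> Sig U) -> Sig A.

Definition measurable_fun {d} (N : vec d -> R) (phi : vec d -> R) : Prop :=
  forall a, borel N (fun x => a < phi x).

(** The sum of nonnegative terms over an arbitrary
    set is the supremum of its finite partial sums, so this is expressed via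
    finite duplicate-free lists contained in S. *)
Definition feasible_fun {d} (N : vec d -> R) (phi : vec d -> R) : Prop :=
  (forall x, 0 <= phi x) /\ measurable_fun N phi /\
  (forall S : vec d -> Prop, well_spread N S ->
     forall L : list (vec d), NoDup L -> (forall v, In v L -> S v) ->
       sumL phi L <= 1).

Definition is_M {d} (V : list (vec d)) (phi : vec d -> R) (m : R) : Prop :=
  is_lub (fun s => exists x : vec d, s = sumL (fun v => phi (vsub v x)) V) m.

(* Both sides are optima of the fractional colouring LP and its dual.  Translating a
   feasible [phi] by [x] turns stable sets of [G] into well-spread sets, so the weights
   [phi (v - x)] form a fractional clique (at most 1 on every stable set) and [M(V, phi)]
   is bounded by the dual optimum.  Conversely a fractional clique [y], extended by zero
   outside [V], is a feasible function with [M(V, y) >= sum_V y].  LP duality, derived from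
   Farkas' lemma proved by Fourier--Motzkin elimination, shows that the primal optimum
   chi_f(G) equals the supremum of the dual values. *)

From Stdlib Require Import Reals List Lra Classical ClassicalEpsilon
  FunctionalExtensionality PropExtensionality Permutation FinFun.
(* After Reals, whose Rtopology also defines [open_set]. *)
Import ListNotations.
Open Scope R_scope.

Lemma pb_true_iff (P : Prop) : pb P = true <-> P.
Proof.
  unfold pb; destruct (excluded_middle_informative P); split; auto; discriminate.
Qed.

Lemma pb_true (P : Prop) : P -> pb P = true.
Proof. apply pb_true_iff. Qed.

Lemma pb_false (P : Prop) : ~ P -> pb P = false.
Proof. unfold pb; destruct (excluded_middle_informative P); tauto. Qed.

Lemma pb_cases (P : Prop) : P /\ pb P = true \/ ~ P /\ pb P = false.
Proof. destruct (classic P); [left|right]; auto using pb_true, pb_false. Qed.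

Section Sums.
Context {A : Type}.
Implicit Types (f g : A -> R) (l : list A).

Lemma sumL_ext f g l : (forall x, In x l -> f x = g x) -> sumL f l = sumL g l.
Proof. induction l as [|a l IH]; simpl; intros H; [reflexivity|]. rewrite H, IH; auto. Qed.

Lemma sumL_le f g l : (forall x, In x l -> f x <= g x) -> sumL f l <= sumL g l.
Proof. induction l as [|a l IH]; simpl; intros H; [lra|]. apply Rplus_le_compat; auto. Qed.

Lemma sumL_eq0 f l : (forall x, In x l -> f x = 0) -> sumL f l = 0.
Proof. induction l as [|a l IH]; simpl; intros H; [reflexivity|]. rewrite H, IH; auto; ring. Qed.

Lemma sumL_scal (r : R) f l : sumL (fun x => r * f x) l = r * sumL f l.
Proof. induction l as [|a l IH]; simpl; [ring|]. rewrite IH; ring. Qed.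

Lemma sumL_mul_add_l f g h l :
  sumL (fun x => (f x + g x) * h x) l = sumL (fun x => f x * h x) l + sumL (fun x => g x * h x) l.
Proof. induction l as [|a l IH]; simpl; [ring|]. rewrite IH; ring. Qed.

Lemma sumL_mul_scal_l (r : R) f h l :
  sumL (fun x => r * f x * h x) l = r * sumL (fun x => f x * h x) l.
Proof. induction l as [|a l IH]; simpl; [ring|]. rewrite IH; ring. Qed.

Lemma sumL_ge_elem f l a : In a l -> (forall x, In x l -> 0 <= f x) -> f a <= sumL f l.
Proof.
  induction l as [|b l IH]; simpl; intros Ha Hf; [destruct Ha|].
  assert (0 <= sumL f l).
  { rewrite <- (sumL_eq0 (fun _ => 0) l) by auto. apply sumL_le; auto. }
  destruct Ha as [->|Ha]; [lra|].
  specialize (IH Ha (fun x h => Hf x (or_intror h))). specialize (Hf b (or_introl eq_refl)). lra.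
Qed.

Lemma sumL_filter f (p : A -> bool) l :
  sumL f (filter p l) = sumL (fun x => if p x then f x else 0) l.
Proof. induction l as [|a l IH]; simpl; auto. destruct (p a); simpl; lra. Qed.

Lemma sumL_single f l a : NoDup l -> In a l ->
  (forall x, In x l -> x <> a -> f x = 0) -> sumL f l = f a.
Proof.
  induction l as [|b l IH]; intros Hnd Ha H; [destruct Ha|].
  apply NoDup_cons_iff in Hnd as [Hb Hnd]. simpl.
  destruct Ha as [->|Ha].
  - rewrite sumL_eq0; [ring|]. intros x Hx. apply H; [right; auto|]. intros ->; contradiction.
  - rewrite H, IH; simpl; auto; [ring| |intros ->; contradiction].
    intros x Hx; apply H; simpl; auto.
Qed.

Lemma sumL_filter_In_comm f l1 l2 : NoDup l1 -> NoDup l2 ->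
  sumL f (filter (fun x => pb (In x l2)) l1) = sumL f (filter (fun x => pb (In x l1)) l2).
Proof.
  intros H1 H2.
  assert (Hperm : Permutation (filter (fun x => pb (In x l2)) l1)
                              (filter (fun x => pb (In x l1)) l2)).
  { apply NoDup_Permutation; try apply NoDup_filter; auto.
    intros x. rewrite !filter_In, !pb_true_iff. tauto. }
  induction Hperm; simpl; lra.
Qed.
End Sums.

Lemma sumL_map {A B} (f : B -> R) (g : A -> B) l : sumL f (map g l) = sumL (fun x => f (g x)) l.
Proof. induction l; simpl; congruence. Qed.

Lemma sumL_comm {A B} (f : A -> B -> R) la lb :
  sumL (fun a => sumL (f a) lb) la = sumL (fun b => sumL (fun a => f a b) la) lb.
Proof.
  induction la as [|a la IH]; simpl.
  - symmetry. apply sumL_eq0. reflexivity.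
  - rewrite IH. clear IH. induction lb as [|b lb IH]; simpl; [ring|]. rewrite <- IH. ring.
Qed.

Section Farkas.
Context {K : Type}.

(* The pair [(a, beta)] encodes the linear constraint [sum_k a k * z k <= beta]. *)
Definition lincon : Type := ((K -> R) * R)%type.

Definition dot (ks : list K) (a z : K -> R) : R := sumL (fun k => a k * z k) ks.

Definition satisfies (ks : list K) (z : K -> R) (con : lincon) : Prop :=
  dot ks (fst con) z <= snd con.

Definition con_add (c1 c2 : lincon) : lincon := (fun k => fst c1 k + fst c2 k, snd c1 + snd c2).
Definition con_scale (l : R) (con : lincon) : lincon := (fun k => l * fst con k, l * snd con).

Inductive cone (L : list lincon) : lincon -> Prop :=
| cone_in con : In con L -> cone L con
| cone_add c1 c2 : cone L c1 -> cone L c2 -> cone L (con_add c1 c2)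
| cone_scale l con : 0 <= l -> cone L con -> cone L (con_scale l con).

Lemma cone_trans L L' con : (forall c', In c' L' -> cone L c') -> cone L' con -> cone L con.
Proof. intros HL'. induction 1; auto using cone_add, cone_scale. Qed.

Lemma cone_coord_zero L k con : (forall c', In c' L -> fst c' k = 0) -> cone L con -> fst con k = 0.
Proof.
  intros HL. induction 1 as [con Hc|c1 c2 _ IH1 _ IH2|l con _ _ IH]; simpl; auto.
  - rewrite IH1, IH2; ring.
  - rewrite IH; ring.
Qed.

Lemma dot_lin ks al be (u w z : K -> R) :
  dot ks (fun j => al * u j + be * w j) z = al * dot ks u z + be * dot ks w z.
Proof. unfold dot; induction ks as [|k ks IH]; simpl; [ring|]. rewrite IH; ring. Qed.

Definition upd (z : K -> R) (k : K) (t : R) : K -> R := fun j => if pb (j = k) then t else z j.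

Lemma satisfies_upd ks z k t con : ~ In k ks ->
  satisfies (k :: ks) (upd z k t) con <-> fst con k * t <= snd con - dot ks (fst con) z.
Proof.
  intros Hk. unfold satisfies.
  replace (dot (k :: ks) (fst con) (upd z k t)) with (fst con k * t + dot ks (fst con) z); [lra|].
  unfold dot, upd. simpl. rewrite pb_true by reflexivity. f_equal.
  apply sumL_ext. intros j Hj. rewrite pb_false; [reflexivity|]. intros ->; contradiction.
Qed.

Definition fm_combine (k : K) (p q : lincon) : lincon :=
  con_add (con_scale (- fst q k) p) (con_scale (fst p k) q).

Definition fm_eliminate (k : K) (L : list lincon) : list lincon :=
  filter (fun con => pb (fst con k = 0)) L ++
  flat_map (fun p => map (fm_combine k p) (filter (fun q => pb (fst q k < 0)) L))
    (filter (fun p => pb (0 < fst p k)) L).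

Lemma in_fm_eliminate k L con : In con (fm_eliminate k L) <->
  In con L /\ fst con k = 0 \/
  exists p q, In p L /\ 0 < fst p k /\ In q L /\ fst q k < 0 /\ con = fm_combine k p q.
Proof.
  unfold fm_eliminate. rewrite in_app_iff, filter_In, pb_true_iff, in_flat_map. split.
  - intros [H|[p [Hp Hc]]]; [left; exact H|right].
    rewrite filter_In, pb_true_iff in Hp. apply in_map_iff in Hc as [q [<- Hq]].
    rewrite filter_In, pb_true_iff in Hq. exists p, q. tauto.
  - intros [H|(p & q & Hp & Hpk & Hq & Hqk & ->)]; [left; exact H|right].
    exists p. rewrite filter_In, pb_true_iff. split; [auto|].
    apply in_map. rewrite filter_In, pb_true_iff. auto.
Qed.

Lemma fm_eliminate_cone k L con : In con (fm_eliminate k L) -> cone L con.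
Proof.
  rewrite in_fm_eliminate.
  intros [[H _]|(p & q & Hp & Hpk & Hq & Hqk & ->)]; [apply cone_in; auto|].
  apply cone_add; apply cone_scale; auto using cone_in; lra.
Qed.

Lemma fm_eliminate_coord k L con : In con (fm_eliminate k L) -> fst con k = 0.
Proof.
  rewrite in_fm_eliminate. intros [[_ H]|(p & q & _ & _ & _ & _ & ->)]; auto.
  simpl. ring.
Qed.

Lemma fm_combine_bound ks z k p q : 0 < fst p k -> fst q k < 0 ->
  satisfies ks z (fm_combine k p q) ->
  (snd q - dot ks (fst q) z) / fst q k <= (snd p - dot ks (fst p) z) / fst p k.
Proof.
  unfold satisfies, fm_combine, con_add, con_scale. simpl. rewrite dot_lin.
  set (ap := fst p k). set (aq := fst q k).
  set (s := (snd p - dot ks (fst p) z) / ap). set (u := (snd q - dot ks (fst q) z) / aq).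
  intros Hp Hq H.
  assert (Ep : dot ks (fst p) z = snd p - ap * s) by (unfold s; field; lra).
  assert (Eq : dot ks (fst q) z = snd q - aq * u) by (unfold u; field; lra).
  rewrite Ep, Eq in H.
  assert (0 < ap * - aq) by nra. nra.
Qed.

Lemma exists_between (U Lo : list R) : (forall u l, In u U -> In l Lo -> l <= u) ->
  exists t, (forall u, In u U -> t <= u) /\ (forall l, In l Lo -> l <= t).
Proof.
  induction U as [|u U IH]; intros H.
  - clear H. induction Lo as [|l Lo [t [_ Ht]]].
    + exists 0. split; intros _ [].
    + exists (Rmax l t). split; [intros _ []|].
      intros l' [<-|Hl']; [apply Rmax_l|]. eapply Rle_trans; [apply Ht; auto|apply Rmax_r].
  - destruct IH as [t [Ht1 Ht2]]; [intros; apply H; simpl; auto|].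
    exists (Rmin u t). split.
    + intros u' [<-|Hu']; [apply Rmin_l|]. eapply Rle_trans; [apply Rmin_r|auto].
    + intros l Hl. apply Rmin_glb; [apply H; simpl|]; auto.
Qed.

Lemma fm_eliminate_extend ks k L z : ~ In k ks ->
  (forall con, In con (fm_eliminate k L) -> satisfies ks z con) ->
  exists t, forall con, In con L -> satisfies (k :: ks) (upd z k t) con.
Proof.
  intros Hk Hz.
  set (bound := fun con : lincon => (snd con - dot ks (fst con) z) / fst con k).
  destruct (exists_between (map bound (filter (fun p => pb (0 < fst p k)) L))
                           (map bound (filter (fun q => pb (fst q k < 0)) L))) as [t [Hup Hlo]].
  { intros u w Hu Hw. apply in_map_iff in Hu as [p [<- Hp]]. apply in_map_iff in Hw as [q [<- Hq]].
    rewrite filter_In, pb_true_iff in Hp, Hq.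
    apply fm_combine_bound; try tauto. apply Hz, in_fm_eliminate. right. exists p, q. tauto. }
  exists t. intros con Hc. apply satisfies_upd; auto.
  assert (E : fst con k <> 0 -> fst con k * bound con = snd con - dot ks (fst con) z)
    by (intros; unfold bound; field; auto).
  destruct (Rtotal_order 0 (fst con k)) as [Hpos|[Hzero|Hneg]].
  - rewrite <- E by lra. apply Rmult_le_compat_l; [lra|]. apply Hup, in_map.
    rewrite filter_In, pb_true_iff; auto.
  - rewrite <- Hzero, Rmult_0_l.
    assert (H0 : satisfies ks z con) by (apply Hz, in_fm_eliminate; auto).
    unfold satisfies in H0. lra.
  - rewrite <- E by lra. apply Rmult_le_compat_neg_l; [lra|]. apply Hlo, in_map.
    rewrite filter_In, pb_true_iff; auto.
Qed.

Theorem farkas (ks : list K) (L : list lincon) : NoDup ks ->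
  (exists z, forall con, In con L -> satisfies ks z con) \/
  (exists con, cone L con /\ (forall k, In k ks -> fst con k = 0) /\ snd con < 0).
Proof.
  revert L; induction ks as [|k ks IH]; intros L Hnd.
  - destruct (classic (exists con, In con L /\ snd con < 0)) as [(con & Hc & Hneg)|Hno].
    + right. exists con. split; [apply cone_in; auto|]. split; [intros _ []|auto].
    + left. exists (fun _ => 0). intros con Hc. unfold satisfies, dot. simpl.
      apply Rnot_lt_le. intros Hlt. apply Hno. eauto.
  - apply NoDup_cons_iff in Hnd as [Hk Hnd].
    destruct (IH (fm_eliminate k L) Hnd) as [[z Hz]|(con & Hc & Hzero & Hneg)].
    + left. destruct (fm_eliminate_extend ks k L z Hk Hz) as [t Ht]. eauto.
    + right. exists con. split; [|split; [|exact Hneg]].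
      * apply (cone_trans _ (fm_eliminate k L)); [|exact Hc]. apply fm_eliminate_cone.
      * intros j [<-|Hj]; auto.
        apply (cone_coord_zero (fm_eliminate k L)); [|exact Hc]. apply fm_eliminate_coord.
Qed.
End Farkas.

Section WeakDuality.
Context {I K : Type} (rs : list I) (ks : list K) (a : I -> K -> R) (b : I -> R) (c : K -> R).

(* Primal: minimize [c . x] subject to [A x >= b], [x >= 0]; dual: maximize [y . b]
   subject to [y A <= c], [y >= 0].  Rows are indexed by [rs], columns by [ks]. *)
Definition primal_feasible (x : K -> R) : Prop :=
  (forall k, In k ks -> 0 <= x k) /\
  (forall i, In i rs -> b i <= sumL (fun k => a i k * x k) ks).

Definition primal_value (x : K -> R) : R := sumL (fun k => c k * x k) ks.

Definition dual_feasible (y : I -> R) : Prop :=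
  (forall i, In i rs -> 0 <= y i) /\
  (forall k, In k ks -> sumL (fun i => y i * a i k) rs <= c k).

Definition dual_value (y : I -> R) : R := sumL (fun i => y i * b i) rs.

Lemma lp_weak_duality x y : primal_feasible x -> dual_feasible y -> dual_value y <= primal_value x.
Proof.
  intros [Hx0 Hx] [Hy0 Hy]. unfold dual_value, primal_value.
  apply Rle_trans with (sumL (fun i => y i * sumL (fun k => a i k * x k) ks) rs).
  { apply sumL_le. intros i Hi. apply Rmult_le_compat_l; auto. }
  replace (sumL (fun i => y i * sumL (fun k => a i k * x k) ks) rs)
    with (sumL (fun k => sumL (fun i => y i * a i k) rs * x k) ks).
  - apply sumL_le. intros k Hk. apply Rmult_le_compat_r; auto.
  - transitivity (sumL (fun k => sumL (fun i => y i * a i k * x k) rs) ks).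
    + apply sumL_ext. intros k _. rewrite Rmult_comm, <- sumL_scal. apply sumL_ext. intros; ring.
    + rewrite <- sumL_comm. apply sumL_ext. intros i _. rewrite <- sumL_scal.
      apply sumL_ext. intros; ring.
Qed.
End WeakDuality.

Section StrongDuality.
Context {I K : Type} (rs : list I) (ks : list K) (a : I -> K -> R) (b : I -> R) (c : K -> R).

Definition row_con (i : I) : @lincon K := (fun k => - a i k, - b i).
Definition sign_con (k : K) : @lincon K := (fun j => if pb (j = k) then -1 else 0, 0).

(* [A z >= b], [z >= 0] and [c . z <= delta]. *)
Definition duality_system (delta : R) : list (@lincon K) :=
  map row_con rs ++ map sign_con ks ++ [(c, delta)].

Lemma duality_system_solution delta z : NoDup ks ->
  (forall con, In con (duality_system delta) -> satisfies ks z con) ->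
  primal_feasible rs ks a b z /\ primal_value ks c z <= delta.
Proof.
  intros Hks Hz. unfold duality_system in Hz. split; [split|].
  - intros k Hk.
    assert (H : satisfies ks z (sign_con k)).
    { apply Hz, in_or_app; right; apply in_or_app; left; apply in_map; auto. }
    unfold satisfies, dot, sign_con in H. simpl in H.
    rewrite (sumL_single _ _ k), pb_true in H; auto; [lra|].
    intros j _ Hj. rewrite pb_false by auto. ring.
  - intros i Hi.
    assert (H : satisfies ks z (row_con i)) by (apply Hz, in_or_app; left; apply in_map; auto).
    unfold satisfies, dot, row_con in H. simpl in H.
    rewrite (sumL_ext _ (fun k => -1 * (a i k * z k))), sumL_scal in H; [lra|intros; ring].
  - apply (Hz (c, delta)). rewrite !in_app_iff. simpl; auto.
Qed.

Definition dual_combination (delta : R) (con : @lincon K) : Prop :=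
  exists lam (y : I -> R) (mu : K -> R),
    0 <= lam /\ (forall i, 0 <= y i) /\ (forall k, 0 <= mu k) /\
    (forall k, fst con k = lam * c k - sumL (fun i => y i * a i k) rs - mu k) /\
    snd con = lam * delta - dual_value rs b y.

Lemma dual_combination_gen delta con : NoDup rs ->
  In con (duality_system delta) -> dual_combination delta con.
Proof.
  intros Hrs. unfold duality_system. rewrite !in_app_iff, !in_map_iff.
  intros [(i & <- & Hi)|[(k0 & <- & Hk0)|[<-|[]]]].
  - exists 0, (fun j => if pb (j = i) then 1 else 0), (fun _ => 0).
    repeat split; try (intros; lra).
    + intros j. destruct (pb (j = i)); lra.
    + intros k. cbn [fst snd row_con].
      rewrite (sumL_single _ _ i), pb_true; auto; [ring|].
      intros j _ Hj. rewrite pb_false by auto. ring.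
    + cbn [fst snd row_con].
      unfold dual_value. rewrite (sumL_single _ _ i), pb_true; auto; [ring|].
      intros j _ Hj. rewrite pb_false by auto. ring.
  - exists 0, (fun _ => 0), (fun j => if pb (j = k0) then 1 else 0).
    repeat split; try (intros; lra).
    + intros j. destruct (pb (j = k0)); lra.
    + intros k. cbn [fst snd sign_con].
      rewrite sumL_eq0 by (intros; ring). destruct (pb (k = k0)); ring.
    + cbn [fst snd sign_con].
      unfold dual_value. rewrite sumL_eq0 by (intros; ring). ring.
  - exists 1, (fun _ => 0), (fun _ => 0).
    repeat split; try (intros; lra).
    + intros k. cbn [fst snd]. rewrite sumL_eq0 by (intros; ring). ring.
    + cbn [fst snd]. unfold dual_value. rewrite sumL_eq0 by (intros; ring). ring.
Qed.

Lemma dual_combination_add delta c1 c2 : dual_combination delta c1 -> dual_combination delta c2 ->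
  dual_combination delta (con_add c1 c2).
Proof.
  intros (l1 & y1 & m1 & Hl1 & Hy1 & Hm1 & Hf1 & Hs1) (l2 & y2 & m2 & Hl2 & Hy2 & Hm2 & Hf2 & Hs2).
  exists (l1 + l2), (fun i => y1 i + y2 i), (fun k => m1 k + m2 k).
  repeat split.
  - lra.
  - intros i. specialize (Hy1 i). specialize (Hy2 i). lra.
  - intros k. specialize (Hm1 k). specialize (Hm2 k). lra.
  - intros k. cbn [fst snd con_add]. rewrite Hf1, Hf2.
    rewrite (sumL_mul_add_l y1 y2 (fun i => a i k)). ring.
  - cbn [fst snd con_add]. rewrite Hs1, Hs2. unfold dual_value.
    rewrite (sumL_mul_add_l y1 y2 b). ring.
Qed.

Lemma dual_combination_scale delta l con : 0 <= l -> dual_combination delta con ->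
  dual_combination delta (con_scale l con).
Proof.
  intros Hl (l1 & y1 & m1 & Hl1 & Hy1 & Hm1 & Hf1 & Hs1).
  exists (l * l1), (fun i => l * y1 i), (fun k => l * m1 k).
  repeat split.
  - nra.
  - intros i. specialize (Hy1 i). nra.
  - intros k. specialize (Hm1 k). nra.
  - intros k. cbn [fst snd con_scale]. rewrite Hf1.
    rewrite (sumL_mul_scal_l l y1 (fun i => a i k)). ring.
  - cbn [fst snd con_scale]. rewrite Hs1. unfold dual_value.
    rewrite (sumL_mul_scal_l l y1 b). ring.
Qed.

Lemma cone_dual_combination delta con : NoDup rs ->
  cone (duality_system delta) con -> dual_combination delta con.
Proof.
  intros Hrs. induction 1;
    auto using dual_combination_gen, dual_combination_add, dual_combination_scale.
Qed.

(* A combination with zero coefficients and negative right-hand side would be a Farkas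
   certificate: for [lam > 0] it rescales to a dual point of value above [delta], and for
   [lam = 0] it is a dual ray of positive value, contradicting weak duality against [x0]. *)
Lemma no_dual_certificate delta x0 con :
  primal_feasible rs ks a b x0 ->
  is_upper_bound (fun v => exists y, dual_feasible rs ks a c y /\ v = dual_value rs b y) delta ->
  dual_combination delta con -> (forall k, In k ks -> fst con k = 0) -> 0 <= snd con.
Proof.
  intros Hx0 Hdelta (lam & y & mu & Hlam & Hy & Hmu & Hfst & Hsnd) Hzero.
  assert (Hya : forall k, In k ks -> sumL (fun i => y i * a i k) rs = lam * c k - mu k).
  { intros k Hk. specialize (Hzero k Hk). rewrite Hfst in Hzero. lra. }
  rewrite Hsnd. destruct (Rle_lt_or_eq_dec 0 lam Hlam) as [Hpos|<-].
  - set (y' := fun i => / lam * y i).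
    assert (Hy' : dual_feasible rs ks a c y').
    { split; [intros i _; apply Rmult_le_pos; [left; apply Rinv_0_lt_compat|]; auto|].
      intros k Hk. unfold y'.
      rewrite (sumL_mul_scal_l (/ lam) y (fun i => a i k)), Hya by auto.
      specialize (Hmu k). apply Rmult_le_reg_l with lam; auto.
      rewrite <- Rmult_assoc, Rinv_r by lra. lra. }
    assert (Hv : dual_value rs b y' <= delta) by (apply Hdelta; eauto).
    unfold dual_value, y' in Hv.
    rewrite (sumL_mul_scal_l (/ lam) y b) in Hv.
    apply Rmult_le_compat_l with (r := lam) in Hv; [|lra].
    rewrite <- Rmult_assoc, Rinv_r in Hv by lra. unfold dual_value. lra.
  - assert (Hray : dual_feasible rs ks a (fun _ => 0) y).
    { split; [intros; auto|]. intros k Hk. rewrite Hya by auto. specialize (Hmu k). lra. }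
    pose proof (lp_weak_duality rs ks a b (fun _ => 0) x0 y Hx0 Hray) as H.
    unfold primal_value in H. rewrite sumL_eq0 in H by (intros; ring). lra.
Qed.

Theorem lp_strong_duality x0 y0 : NoDup rs -> NoDup ks ->
  primal_feasible rs ks a b x0 -> dual_feasible rs ks a c y0 ->
  exists x, primal_feasible rs ks a b x /\
    is_lub (fun v => exists y, dual_feasible rs ks a c y /\ v = dual_value rs b y)
      (primal_value ks c x).
Proof.
  intros Hrs Hks Hx0 Hy0.
  set (D := fun v => exists y, dual_feasible rs ks a c y /\ v = dual_value rs b y).
  assert (Hub : forall x, primal_feasible rs ks a b x -> is_upper_bound D (primal_value ks c x)).
  { intros x Hx v (y & Hy & ->). apply (lp_weak_duality rs ks a b c); auto. }
  destruct (completeness D) as [delta Hdelta].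
  { exists (primal_value ks c x0). auto. }
  { exists (dual_value rs b y0), y0. auto. }
  destruct (farkas ks (duality_system delta) Hks) as [[z Hz]|(con & Hcone & Hzero & Hneg)].
  - destruct (duality_system_solution delta z Hks Hz) as [Hz_feas Hz_val].
    exists z. split; auto.
    replace (primal_value ks c z) with delta; auto.
    apply Rle_antisym; auto. apply Hdelta, Hub, Hz_feas.
  - exfalso.
    pose proof (no_dual_certificate delta x0 con Hx0 (proj1 Hdelta)
                  (cone_dual_combination delta con Hrs Hcone) Hzero).
    lra.
Qed.
End StrongDuality.

Section Subsets.
Context {A : Type}.

Lemma subsets_nil (l : list A) : In [] (subsets l).
Proof. induction l; simpl; auto. apply in_or_app; right; auto. Qed.

Lemma subsets_single (l : list A) v : In v l -> In [v] (subsets l).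
Proof.
  induction l as [|a l IH]; simpl; intros H; [destruct H|]. apply in_or_app.
  destruct H as [->|H]; [left; apply in_map, subsets_nil|right; auto].
Qed.

Lemma subsets_filter (l : list A) (p : A -> bool) : In (filter p l) (subsets l).
Proof.
  induction l; simpl; auto.
  destruct (p a); apply in_or_app; [left; apply in_map|right]; auto.
Qed.

Lemma subsets_incl (l : list A) S : In S (subsets l) -> incl S l.
Proof.
  revert S; induction l as [|a l IH]; simpl; intros S H.
  - destruct H as [<-|[]]. apply incl_nil_l.
  - apply in_app_or in H as [H|H].
    + apply in_map_iff in H as [S' [<- HS']]. apply incl_cons; [left; auto|]. apply incl_tl; auto.
    + apply incl_tl; auto.
Qed.

Lemma subsets_NoDup (l : list A) : NoDup l -> NoDup (subsets l).
Proof.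
  induction l as [|a l IH]; simpl; intros H; [repeat constructor; intros []|].
  apply NoDup_cons_iff in H as [Ha Hl]. apply NoDup_app.
  - apply Injective_map_NoDup; auto. intros x y E; injection E; auto.
  - auto.
  - intros S HS HS'. apply in_map_iff in HS as [S' [<- _]].
    apply subsets_incl in HS'. apply Ha, HS'. left; auto.
Qed.
End Subsets.

Section Norm.
Context {d : nat} (N : vec d -> R) (HN : is_norm N).

Lemma vsub_zero (v : vec d) : vsub v vzero = v.
Proof. apply functional_extensionality. intros i. unfold vsub, vzero. ring. Qed.

Lemma vsub_shift (v w x : vec d) : vsub (vsub v x) (vsub w x) = vsub v w.
Proof. apply functional_extensionality. intros i. unfold vsub. ring. Qed.

Lemma vsub_shift_inj (x : vec d) : Injective (fun v => vsub v x).
Proof.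
  intros v w E. apply functional_extensionality. intros i.
  apply (f_equal (fun u => u i)) in E. unfold vsub in E. lra.
Qed.

Lemma norm_nonneg x : 0 <= N x.
Proof.
  destruct HN as [_ [Hscal Htri]].
  assert (H0 : N vzero = 0).
  { replace vzero with (vscal 0 x)
      by (apply functional_extensionality; intros i; unfold vscal, vzero; ring).
    rewrite Hscal, Rabs_R0. ring. }
  pose proof (Htri x (vscal (-1) x)) as H.
  replace (vadd x (vscal (-1) x)) with (@vzero d) in H
    by (apply functional_extensionality; intros i; unfold vadd, vscal, vzero; ring).
  rewrite H0, Hscal, Rabs_left in H by lra. lra.
Qed.

Lemma norm_sub_pos v w : v <> w -> 0 < N (vsub v w).
Proof.
  intros Hvw. destruct (norm_nonneg (vsub v w)) as [|E]; auto.
  exfalso. apply Hvw. symmetry in E. apply (proj1 HN) in E.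
  apply functional_extensionality. intros i. apply (f_equal (fun u => u i)) in E.
  unfold vsub, vzero in E. lra.
Qed.

Lemma open_neq p : open_set N (fun u => u <> p).
Proof.
  intros u Hu. exists (N (vsub p u)). split; [apply norm_sub_pos; auto|].
  intros y Hy ->. lra.
Qed.
End Norm.

Section Borel.
Context {d : nat} (N : vec d -> R).

Lemma borel_ext (A B : vec d -> Prop) : (forall x, A x <-> B x) -> borel N A -> borel N B.
Proof.
  intros H HA. replace B with A; auto.
  apply functional_extensionality. intros x. apply propositional_extensionality. auto.
Qed.

Lemma borel_open U : open_set N U -> borel N U.
Proof. intros HU Sig _ Hopen. auto. Qed.

Lemma borel_empty : borel N (fun _ => False).
Proof. intros Sig [H _] _. exact H. Qed.

Lemma borel_compl A : borel N A -> borel N (fun x => ~ A x).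
Proof. intros HA Sig HSig Hopen. apply (proj1 (proj2 HSig)), HA; auto. Qed.

Lemma borel_union A B : borel N A -> borel N B -> borel N (fun x => A x \/ B x).
Proof.
  intros HA HB Sig HSig Hopen.
  set (An := fun n : nat => match n with O => A | S _ => B end).
  replace (fun x => A x \/ B x) with (fun x => exists n, An n x).
  - apply (proj2 (proj2 HSig)). intros [|n]; simpl; [apply HA|apply HB]; auto.
  - apply functional_extensionality. intros x. apply propositional_extensionality. split.
    + intros [[|n] H]; simpl in H; auto.
    + intros [H|H]; [exists O|exists 1%nat]; auto.
Qed.

Lemma borel_In (HN : is_norm N) (F : list (vec d)) : borel N (fun u => In u F).
Proof.
  induction F as [|p F IH].
  - eapply borel_ext; [|apply borel_empty]. simpl. tauto.
  - eapply borel_ext;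
      [|apply borel_union; [apply borel_compl, borel_open, (open_neq N HN p)|exact IH]].
    intros u. simpl. split.
    + intros [H|H]; auto. left. apply NNPP. intros Hne. apply H. auto.
    + intros [<-|H]; auto.
Qed.
End Borel.

Section FractionalColoring.
Context {d : nat} (N : vec d -> R) (V : list (vec d)).

Definition incidence (v : vec d) (S : list (vec d)) : R := if pb (In v S) then 1 else 0.

Definition fractional_clique (y : vec d -> R) : Prop :=
  dual_feasible V (stable_sets N V) incidence (fun _ => 1) y.

Lemma in_stable_sets S : In S (stable_sets N V) <-> In S (subsets V) /\ stable N S.
Proof. unfold stable_sets. rewrite filter_In, pb_true_iff. reflexivity. Qed.

Lemma stable_sets_NoDup : NoDup V -> NoDup (stable_sets N V).
Proof. intros HV. apply NoDup_filter, subsets_NoDup, HV. Qed.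

Lemma singleton_stable_set v : In v V -> In [v] (stable_sets N V).
Proof.
  intros Hv. apply in_stable_sets. split.
  - apply subsets_single, Hv.
  - intros u w [<-|[]] [<-|[]] [Hne _]. auto.
Qed.

Lemma separated_stable_set (L : list (vec d)) :
  (forall v w, In v L -> In w L -> v <> w -> N (vsub v w) > 1) ->
  In (filter (fun v => pb (In v L)) V) (stable_sets N V).
Proof.
  intros HL. apply in_stable_sets. split; [apply subsets_filter|].
  intros v w Hv Hw [Hne Hle]. rewrite filter_In, pb_true_iff in Hv, Hw.
  specialize (HL v w (proj2 Hv) (proj2 Hw) Hne). lra.
Qed.

Lemma frac_col_feasible_primal x :
  frac_col_feasible N V x <-> primal_feasible V (stable_sets N V) incidence (fun _ => 1) x.
Proof.
  unfold frac_col_feasible, primal_feasible.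
  assert (E : forall v, sumL x (filter (fun S => pb (In v S)) (stable_sets N V)) =
                        sumL (fun S => incidence v S * x S) (stable_sets N V)).
  { intros v. rewrite sumL_filter. apply sumL_ext. intros S _. unfold incidence.
    destruct (pb (In v S)); ring. }
  setoid_rewrite E. reflexivity.
Qed.

Lemma frac_col_value_primal x :
  frac_col_value N V x = primal_value (stable_sets N V) (fun _ => 1) x.
Proof. unfold frac_col_value, primal_value. apply sumL_ext. intros; ring. Qed.

Lemma dual_value_ones y : dual_value V (fun _ => 1) y = sumL y V.
Proof. unfold dual_value. apply sumL_ext. intros; ring. Qed.

Lemma ones_primal_feasible :
  primal_feasible V (stable_sets N V) incidence (fun _ => 1) (fun _ => 1).
Proof.
  split; [intros; lra|]. intros v Hv.
  replace 1 with (incidence v [v] * 1) at 1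
    by (unfold incidence; rewrite pb_true; simpl; auto; ring).
  apply (sumL_ge_elem (fun S => incidence v S * 1)); [apply singleton_stable_set; auto|].
  intros S _. unfold incidence. destruct (pb (In v S)); lra.
Qed.

Lemma zero_fractional_clique : fractional_clique (fun _ => 0).
Proof.
  split; [intros; lra|]. intros S _. rewrite sumL_eq0 by (intros; ring). lra.
Qed.

Lemma shifted_fractional_clique phi x : NoDup V -> feasible_fun N phi ->
  fractional_clique (fun v => phi (vsub v x)).
Proof.
  intros HV (Hphi0 & _ & Hphi). split; [auto|]. intros S HS.
  apply in_stable_sets in HS as [_ HS].
  set (T := filter (fun v => pb (In v S)) V).
  replace (sumL (fun v => phi (vsub v x) * incidence v S) V)
    with (sumL phi (map (fun v => vsub v x) T)).
  - apply (Hphi (fun u => In u (map (fun v => vsub v x) T))).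
    + intros u w Hu Hw Huw.
      apply in_map_iff in Hu as [v [<- Hv]]. apply in_map_iff in Hw as [w' [<- Hw']].
      unfold T in Hv, Hw'. rewrite filter_In, pb_true_iff in Hv, Hw'.
      rewrite vsub_shift. apply Rnot_le_lt. intros Hle.
      apply (HS v w' (proj2 Hv) (proj2 Hw')). split; [|exact Hle]. intros ->. auto.
    + apply Injective_map_NoDup; [apply vsub_shift_inj|]. apply NoDup_filter, HV.
    + auto.
  - rewrite sumL_map. unfold T. rewrite sumL_filter. apply sumL_ext. intros v _.
    unfold incidence. destruct (pb (In v S)); ring.
Qed.

Definition zero_extension (y : vec d -> R) (u : vec d) : R := if pb (In u V) then y u else 0.

Lemma zero_extension_measurable (HN : is_norm N) y : measurable_fun N (zero_extension y).
Proof.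
  intros t. unfold zero_extension. destruct (Rlt_or_le t 0) as [Ht|Ht].
  - eapply borel_ext; [|apply borel_compl, (borel_In N HN (filter (fun v => pb (y v <= t)) V))].
    intros u. cbv beta. rewrite filter_In, pb_true_iff.
    destruct (pb_cases (In u V)) as [[Hu ->]|[Hu ->]]; split; try tauto.
    + intros H. apply Rnot_le_lt. tauto.
    + intros H [_ H']. lra.
  - eapply borel_ext; [|apply (borel_In N HN (filter (fun v => pb (t < y v)) V))].
    intros u. cbv beta. rewrite filter_In, pb_true_iff.
    destruct (pb_cases (In u V)) as [[Hu ->]|[Hu ->]]; split; try tauto; lra.
Qed.

Lemma zero_extension_feasible y : is_norm N -> NoDup V -> fractional_clique y ->
  feasible_fun N (zero_extension y).
Proof.
  intros HN HV [Hy0 Hy]. split; [|split; [apply zero_extension_measurable; auto|]].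
  - intros u. unfold zero_extension. destruct (pb_cases (In u V)) as [[Hu ->]|[Hu ->]]; auto; lra.
  - intros W HW L HL HLW.
    set (S := filter (fun v => pb (In v L)) V).
    assert (HS : In S (stable_sets N V)).
    { apply separated_stable_set. intros v w Hv Hw. apply HW; auto. }
    apply Rle_trans with (sumL (fun v => y v * incidence v S) V); [right|auto].
    unfold zero_extension. rewrite <- sumL_filter, sumL_filter_In_comm, sumL_filter by auto.
    apply sumL_ext. intros v Hv. unfold incidence, S.
    destruct (pb_cases (In v L)) as [[H ->]|[H ->]].
    + rewrite pb_true by (apply filter_In; auto using pb_true). ring.
    + rewrite pb_false by (rewrite filter_In, pb_true_iff; tauto). ring.
Qed.

Lemma is_M_exists phi : NoDup V -> feasible_fun N phi -> exists m, is_M V phi m.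
Proof.
  intros HV Hphi.
  destruct (completeness (fun s => exists x, s = sumL (fun v => phi (vsub v x)) V)) as [m Hm].
  - exists (primal_value (stable_sets N V) (fun _ => 1) (fun _ => 1)). intros s [x ->].
    rewrite <- dual_value_ones.
    apply (lp_weak_duality V (stable_sets N V) incidence (fun _ => 1) (fun _ => 1)).
    + apply ones_primal_feasible.
    + apply shifted_fractional_clique; auto.
  - exists (sumL (fun v => phi (vsub v vzero)) V), vzero. reflexivity.
  - exists m. exact Hm.
Qed.
End FractionalColoring.

Theorem lemma5p1 (d : nat) (N : vec d -> R) (HN : is_norm N)
    (V : list (vec d)) (HV : NoDup V) :
  exists c : R, is_frac_chrom N V c /\
    is_lub (fun m => exists phi, feasible_fun N phi /\ is_M V phi m) c.
Proof.
  destruct (lp_strong_duality V (stable_sets N V) incidence (fun _ => 1) (fun _ => 1)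
              (fun _ => 1) (fun _ => 0) HV (stable_sets_NoDup N V HV)
              (ones_primal_feasible N V) (zero_fractional_clique N V)) as (x & Hx & Hdual_lub).
  exists (primal_value (stable_sets N V) (fun _ => 1) x). split; [split|split].
  - exists x. rewrite frac_col_feasible_primal, frac_col_value_primal. auto.
  - intros x' Hx'. rewrite frac_col_value_primal. apply Hdual_lub.
    intros v (y & Hy & ->).
    apply (lp_weak_duality V (stable_sets N V) incidence (fun _ => 1) (fun _ => 1)); auto.
    apply frac_col_feasible_primal; auto.
  - intros m (phi & Hphi & HM). apply HM. intros s (z & ->). apply Hdual_lub.
    exists (fun v => phi (vsub v z)). rewrite dual_value_ones.
    split; [apply shifted_fractional_clique; auto|reflexivity].
  - intros u Hu. apply Hdual_lub. intros v (y & Hy & ->).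
    destruct (is_M_exists N V (zero_extension V y)) as [m Hm]; auto using zero_extension_feasible.
    apply Rle_trans with m;
      [|apply Hu; exists (zero_extension V y); auto using zero_extension_feasible].
    apply Hm. exists vzero. rewrite dual_value_ones. apply sumL_ext. intros v Hv.
    unfold zero_extension. rewrite vsub_zero, pb_true; auto.
Qed.
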